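(* Let $S\in\mathbb{Z}_{\ge 0}^{n\times n_s}$ and $T\in\mathbb{Z}_{\ge0}^{n\times n_t}$, and let $\mathcal{C}=\{M\in\mathbb{Z}_{\ge0}^{n_s\times n_t} : SM=T\}$, assumed nonempty. Let $\mathcal{F}=\{x\in\mathbb{Z}_{\ge0}^{1\times n_s} : |\{xM : M\in\mathcal{C}\}|=1\}$. Let $x$ be any input (row vector in $\mathbb{Z}_{\ge0}^{1\times n_s}$), let $v\sim\mathcal{N}(0,I_{n_t\times n_t})$ be a random vector, and let $a=\min_{M\in\mathcal{C}} xMv$ and $b=\max_{M\in\mathcal{C}} xMv$. Then with probability 1, $a=b$ if and only if $x\in\mathcal{F}$.
   Context: Each training input (a bag of source atoms over $n_s$ atom types) is encoded as a row vector of counts, forming the rows of $S$; the corresponding outputs (bags over $n_t$ target atom types) form the rows of $T$. A mapping is a nonnegative integer matrix $M$ whose entry $M_{st}$ is the number of copies of target atom $t$ that source atom $s$ maps to; the output on input $x$ is $xM$. Nonemptiness of $\mathcal{C}$ reflects the standing assumption that the training data are noiseless outputs of a true mapping $M^*$. *)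

From HB Require Import structures.
From mathcomp Require Import all_boot all_order all_algebra.
From mathcomp Require Import all_classical all_reals all_analysis.
Set Implicit Arguments. Unset Strict Implicit. Unset Printing Implicit Defensive.
Import Order.TTheory GRing.Theory Num.Theory.
Local Open Scope classical_set_scope.
Local Open Scope ring_scope.

Definition consistent (n ns nt : nat) (S : 'M[nat]_(n, ns)) (T : 'M[nat]_(n, nt))
  : set 'M[nat]_(ns, nt) := [set M | S *m M = T].

Definition determined (n ns nt : nat) (S : 'M[nat]_(n, ns)) (T : 'M[nat]_(n, nt))
  : set 'rV[nat]_ns :=
  [set x | exists y : 'rV[nat]_nt, [set x *m M | M in consistent S T] = [set y]].

Definition score (R : realType) (ns nt : nat) (x : 'rV[nat]_ns)
  (M : 'M[nat]_(ns, nt)) (v : 'I_nt -> R) : R :=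
  \sum_(j < nt) ((x *m M) ord0 j)%:R * v j.

(* a = min_{M in C} x M v, b = max_{M in C} x M v, taken as inf/sup in the
   extended reals (they coincide with min/max whenever these exist). *)
Definition score_min (R : realType) (n ns nt : nat) (S : 'M[nat]_(n, ns))
  (T : 'M[nat]_(n, nt)) (x : 'rV[nat]_ns) (v : 'I_nt -> R) : \bar R :=
  ereal_inf [set (score x M v)%:E | M in consistent S T].

Definition score_max (R : realType) (n ns nt : nat) (S : 'M[nat]_(n, ns))
  (T : 'M[nat]_(n, nt)) (x : 'rV[nat]_ns) (v : 'I_nt -> R) : \bar R :=
  ereal_sup [set (score x M v)%:E | M in consistent S T].

Definition mutually_independent (d : measure_display) (Omega : measurableType d)
  (R : realType) (P : probability Omega R) (k : nat)
  (X : 'I_k -> {RV P >-> R}) : Prop :=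
  forall B : 'I_k -> set R, (forall i, measurable (B i)) ->
    P (\bigcap_(i in [set: 'I_k]) (X i @^-1` B i)) =
    (\prod_(i < k) P (X i @^-1` B i))%E.

From HB Require Import structures.
From mathcomp Require Import all_boot all_order all_algebra.
From mathcomp Require Import all_classical all_reals all_analysis.
From mathcomp Require Import measurable_realfun ring lra.
Set Implicit Arguments. Unset Strict Implicit. Unset Printing Implicit Defensive.
Import Order.TTheory GRing.Theory Num.Theory.
Local Open Scope classical_set_scope.
Local Open Scope ring_scope.

(* If x is determined, every consistent M yields the same row x M, so the set
   of scores is a singleton and a = b for every v.  Otherwise there are
   consistent M0, M1 with c := x M1 - x M0 <> 0, and a = b forces x M1 v = x M0 v,
   i.e. v lies on the hyperplane sum_j c_j v_j = 0.  This hyperplane is null as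
   soon as the v_j are independent and the coordinate v_j0 with c_j0 <> 0 gives
   mass at most C (b - a) to every interval [a, b]: inside the box |v| <= K,
   partition the other coordinates into cells of width delta; on the hyperplane,
   v_j0 is then confined to an interval of length 2 L delta determined by the
   cell, so by independence the hyperplane has mass at most 2 C L delta.  For
   a standard Gaussian, C is the peak of its density. *)

Lemma normal_prob_itv_le (R : realType) (m s a b : R) : s != 0 -> a <= b ->
  (normal_prob m s [set` `[a, b]] <= (normal_peak s * (b - a))%:E)%E.
Proof.
move=> s0 ab; rewrite /normal_prob.
apply: (@le_trans _ _
  (\int[lebesgue_measure]_(y in [set` `[a, b]]) (normal_peak s)%:E)%E).
  apply: ge0_le_integral => //=.
  - by move=> y _; rewrite lee_fin normal_pdf_ge0.
  - by apply/measurable_EFinP; apply: measurable_funTS; exact: measurable_normal_pdf.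
  - by move=> y _; rewrite lee_fin normal_pdf_ub.
rewrite integral_cst //= lebesgue_measure_itv /=.
case: ltP => _; first by rewrite -EFinD -EFinM.
by rewrite mule0 lee_fin mulr_ge0 ?normal_peak_ge0 ?subr_ge0.
Qed.

Definition grid_point (R : realType) (δ : R) (N t : nat) : R := (t%:R - N%:R) * δ.

Definition grid_index (R : realType) (δ : R) (N : nat) (y : R) : 'I_(N.*2).+1 :=
  inord (Num.truncn (y / δ + N%:R)).

Lemma grid_indexP (R : realType) (δ y : R) (N : nat) : 0 < δ -> `|y| < N%:R * δ ->
  let p := grid_point δ N (grid_index δ N y) in p <= y < p + δ.
Proof.
move=> δ0; rewrite ltr_norml => /andP[ylo yhi] /=.
set u := y / δ + N%:R.
have yu : y = (u - N%:R) * δ by rewrite /u addrK divfK ?gt_eqF.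
have u_ge0 : 0 <= u by rewrite -(pmulr_lge0 _ δ0); rewrite yu mulrBl in ylo; lra.
have u_lt : u < (N + N)%:R.
  by rewrite natrD -(ltr_pM2r δ0); rewrite yu mulrBl in yhi; lra.
have /andP[tu ut] : (Num.truncn u)%:R <= u < (Num.truncn u)%:R + 1.
  by rewrite -mulrSr; exact: truncn_itv.
have t_lt : (Num.truncn u < N.*2.+1)%N.
  by rewrite ltnS -addnn -(ler_nat R); apply: ltW; exact: le_lt_trans tu u_lt.
rewrite /grid_index /grid_point inordK // -/u; apply/andP; split.
- by rewrite [leRHS]yu ler_pM2r //; lra.
- by rewrite [ltLHS]yu -[X in _ < _ + X]mul1r -mulrDl ltr_pM2r //; lra.
Qed.

Lemma grid_point_ltn (R : realType) (δ : R) (N s t : nat) : 0 < δ -> (s < t)%N ->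
  grid_point δ N s + δ <= grid_point δ N t.
Proof.
move=> δ0 st; rewrite /grid_point -[X in _ + X]mul1r -mulrDl ler_pM2r //.
by rewrite addrAC lerD2r natr1 ler_nat.
Qed.

Lemma grid_cell_inj (R : realType) (δ y : R) (N s t : nat) : 0 < δ ->
  grid_point δ N s <= y < grid_point δ N s + δ ->
  grid_point δ N t <= y < grid_point δ N t + δ -> s = t.
Proof.
move=> δ0 /andP[s1 s2] /andP[t1 t2].
by case: (ltngtP s t) => // /(grid_point_ltn N δ0) lt; exfalso; lra.
Qed.

Section LinearCombinationNull.
Context (R : realType) (d : measure_display) (Omega : measurableType d)
  (P : probability Omega R) (k : nat) (X : 'I_k -> {RV P >-> R}).
Hypothesis X_indep : mutually_independent X.

Let box (B : 'I_k -> set R) := \bigcap_(j in [set: 'I_k]) (X j @^-1` B j).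

Let box_measurable B : (forall j, measurable (B j)) -> measurable (box B).
Proof.
move=> mB; apply: fin_bigcap_measurable; first exact: finite_finset.
by move=> j _; apply: measurable_funPTI.
Qed.

Lemma mutually_independent_factor (j0 : 'I_k) (B B' : 'I_k -> set R) :
  (forall j, measurable (B j)) -> B' j0 = setT -> (forall j, j != j0 -> B' j = B j) ->
  P (box B) = (P (X j0 @^-1` B j0) * P (box B'))%E.
Proof.
move=> mB B'j0 B'B.
have mB' j : measurable (B' j) by case: (eqVneq j j0) => [->|/B'B->]; rewrite ?B'j0.
rewrite /box (X_indep mB) (X_indep mB').
rewrite [LHS](bigD1 j0) // [X in (_ * X)%E](bigD1 j0) //.
rewrite B'j0 preimage_setT probability_setT /= mul1e.
by congr (_ * _)%E; apply: eq_bigr => j /B'B ->.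
Qed.

Variables (j0 : 'I_k) (C : R).
Hypothesis X_j0_itv : forall a b, a <= b ->
  (P (X j0 @^-1` [set` `[a, b]]) <= (C * (b - a))%:E)%E.
Variable c : 'I_k -> R.
Hypothesis c_j0 : c j0 != 0.

Let hyperplane := [set w | \sum_j c j * X j w = 0].
Let b j := c j / c j0.
Let L : R := \sum_(j | j != j0) `|b j|.
Let cube (K : nat) := box (fun=> [set` `[- K%:R, K%:R]]).

Let C_ge0 : 0 <= C.
Proof.
have := @X_j0_itv 0 1 ler01; rewrite subr0 mulr1 -lee_fin; apply: le_trans.
exact: measure_ge0.
Qed.

Let L_ge0 : 0 <= L. Proof. by apply: sumr_ge0 => j _. Qed.

Let hyperplane_measurable : measurable hyperplane.
Proof.
have m : measurable_fun setT (fun w => \sum_j c j * X j w).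
  apply: measurable_sum => j; apply: measurable_funM; first exact: measurable_cst.
  exact: measurable_funPT.
by rewrite -[hyperplane]setTI; exact: (m measurableT [set 0] (measurable_set1 0)).
Qed.

Let hyperplane_solve w : hyperplane w -> X j0 w = - \sum_(j | j != j0) b j * X j w.
Proof.
rewrite /hyperplane /= (bigD1 j0) //= => /eqP; rewrite addrC addr_eq0 => /eqP cX.
have -> : \sum_(j | j != j0) b j * X j w = (\sum_(j | j != j0) c j * X j w) / c j0.
  by rewrite mulr_suml; apply: eq_bigr => j _; rewrite mulrAC.
by rewrite cX mulNr opprK mulrC mulKf.
Qed.

Section Grid.
Variables (K : nat) (δ : R).
Hypothesis δ_gt0 : 0 < δ.
Let N := (Num.truncn (K%:R / δ)).+1.
Let lo (t : nat) := grid_point δ N t.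
Let grid := {ffun 'I_k -> 'I_(N.*2).+1}.
(* Cells ignore the coordinate j0; fixing it in D makes them disjoint. *)
Let D := [set κ : grid | κ j0 = ord0].
Let slab (κ : grid) j :=
  if j == j0 then [set: R] else [set` `[lo (κ j), lo (κ j) + δ[].
Let center (κ : grid) := - \sum_(j | j != j0) b j * lo (κ j).
Let band (κ : grid) j :=
  if j == j0 then [set` `[center κ - L * δ, center κ + L * δ]] else slab κ j.

Let K_lt : K%:R < N%:R * δ.
Proof. by rewrite -ltr_pdivrMr //; exact: truncnS_gt. Qed.

Let slab_measurable κ j : measurable (slab κ j).
Proof. by rewrite /slab; case: ifP. Qed.

Let band_measurable κ j : measurable (band κ j).
Proof. by rewrite /band; case: ifP. Qed.

Let box_band_le κ :
  (P (box (band κ)) <= (C * (L * δ *+ 2))%:E * P (box (slab κ)))%E.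
Proof.
rewrite (mutually_independent_factor (j0 := j0) (B' := slab κ) (band_measurable κ));
  first last.
- by move=> j /negbTE nj; rewrite /band nj.
- by rewrite /slab eqxx.
apply: lee_wpmul2r; first exact: measure_ge0.
have Lδ_ge0 : 0 <= L * δ by rewrite mulr_ge0 // ltW.
have -> : L * δ *+ 2 = (center κ + L * δ) - (center κ - L * δ).
  by rewrite mulr2n; lra.
by rewrite /band eqxx; apply: X_j0_itv; lra.
Qed.

Let hyperplane_cube_cover : hyperplane `&` cube K `<=` \bigcup_(κ in D) box (band κ).
Proof.
move=> w [Hw Kw].
have XN j : `|X j w| < N%:R * δ.
  by have := Kw j I; rewrite /= in_itv /= -ler_norml => XK; exact: le_lt_trans XK K_lt.
pose κ : grid := [ffun j => if j == j0 then ord0 else grid_index δ N (X j w)].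
have κ_slab j : j != j0 -> lo (κ j) <= X j w < lo (κ j) + δ.
  by move=> /negbTE nj; rewrite ffunE nj; exact: grid_indexP.
exists κ; first by rewrite /D /= ffunE eqxx.
move=> j _; rewrite /band /slab; case: eqVneq => [->|nj] /=; last first.
  by rewrite in_itv /=; exact: κ_slab.
rewrite in_itv /= -ler_distl (hyperplane_solve Hw) /center.
have -> : - \sum_(i | i != j0) b i * X i w - - \sum_(i | i != j0) b i * lo (κ i) =
    \sum_(i | i != j0) b i * (lo (κ i) - X i w).
  by rewrite opprK addrC -sumrB; apply: eq_bigr => i _; rewrite mulrBr.
apply: le_trans (ler_norm_sum _ _ _) _.
rewrite /L mulr_suml; apply: ler_sum => i ni; rewrite normrM ler_wpM2l //.
by have /andP[] := κ_slab i ni; rewrite ler_norml => *; apply/andP; split; lra.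
Qed.

Let slab_trivIset : trivIset D (fun κ => box (slab κ)).
Proof.
move=> κ κ' Dκ Dκ' [w [Sw S'w]]; apply/ffunP => j.
case: (eqVneq j j0) => [->|nj]; first by rewrite Dκ Dκ'.
have := Sw j I; have := S'w j I; rewrite /slab (negbTE nj) /= !in_itv /= => X'j Xj.
exact/val_inj/(grid_cell_inj δ_gt0 Xj X'j).
Qed.

Lemma hyperplane_cube_le : (P (hyperplane `&` cube K) <= (C * (L * δ *+ 2))%:E)%E.
Proof.
set ε := (C * (L * δ *+ 2))%:E.
have ε_ge0 : (0 <= ε)%E.
  by rewrite lee_fin mulr_ge0 ?C_ge0 // mulrn_wge0 // mulr_ge0 // ltW.
have D_fin : finite_set D := finite_finset.
apply: le_trans (content_sub_fsum P D_fin _ _ hyperplane_cube_cover) _.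
- by move=> κ _; exact: box_measurable.
- apply: measurableI hyperplane_measurable (box_measurable _) => j.
  exact: measurable_itv.
apply: le_trans (lee_fsum D_fin (fun κ _ => box_band_le κ)) _.
rewrite -ge0_mule_fsumr; last by move=> κ; exact: measure_ge0.
rewrite -(measure_fin_bigcup _ D_fin slab_trivIset); last first.
  by move=> κ _; exact: box_measurable.
rewrite -[leRHS]mule1 lee_wpmul2l //; apply: probability_le1.
by apply: fin_bigcup_measurable D_fin _ => κ _; exact: box_measurable.
Qed.

End Grid.

Let hyperplane_cube_null K : P (hyperplane `&` cube K) = 0%E.
Proof.
apply/eqP; rewrite eq_le measure_ge0 andbT; apply/lee_addgt0Pr => e e0; rewrite add0e.
set M := C * (L *+ 2).
have M_ge0 : 0 <= M by rewrite mulr_ge0 ?C_ge0 // mulrn_wge0.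
have δ_gt0 : 0 < e / (M + 1) by rewrite divr_gt0 //; lra.
apply: le_trans (hyperplane_cube_le K δ_gt0) _; rewrite lee_fin.
have -> : C * (L * (e / (M + 1)) *+ 2) = M * e / (M + 1) by rewrite /M !mulr2n; ring.
rewrite ler_pdivrMr; last lra.
have : 0 <= M * e by rewrite mulr_ge0 // ltW.
lra.
Qed.

Lemma linear_combination_eq0_negligible :
  P.-negligible [set w | \sum_j c j * X j w = 0].
Proof.
apply: (@negligibleS _ _ _ _ (\bigcup_K (hyperplane `&` cube K))).
  move=> w Hw; exists (Num.truncn (\sum_j `|X j w|)).+1 => //; split => // j _.
  rewrite /= in_itv /= -ler_norml; apply: le_trans (ltW (truncnS_gt _)).
  by rewrite (bigD1 j) //= lerDl sumr_ge0.
apply: negligible_bigcup => K; apply/negligibleP; last exact: hyperplane_cube_null.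
apply: measurableI hyperplane_measurable (box_measurable _) => j.
exact: measurable_itv.
Qed.

End LinearCombinationNull.

Section Scores.
Variables (R : realType) (n ns nt : nat) (S : 'M[nat]_(n, ns)) (T : 'M[nat]_(n, nt)).
Variable x : 'rV[nat]_ns.

Lemma determined_score_min_max (v : 'I_nt -> R) :
  determined S T x -> score_min S T x v = score_max S T x v.
Proof.
move=> [y xC]; rewrite /score_min /score_max.
pose f (z : 'rV[nat]_nt) := (\sum_(j < nt) (z ord0 j)%:R * v j)%:E.
have -> : [set (score x M v)%:E | M in consistent S T] = [set f y].
  by rewrite -image_set1 -xC image_comp.
by rewrite ereal_inf1 ereal_sup1.
Qed.

Lemma score_min_max_eq (v : 'I_nt -> R) M0 M1 :
  consistent S T M0 -> consistent S T M1 ->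
  score_min S T x v = score_max S T x v -> score x M0 v = score x M1 v.
Proof.
move=> CM0 CM1 minmax.
have inf_le M : consistent S T M -> (score_min S T x v <= (score x M v)%:E)%E.
  by move=> CM; apply: ereal_inf_lbound; exists M.
have le_sup M : consistent S T M -> ((score x M v)%:E <= score_max S T x v)%E.
  by move=> CM; apply: ereal_sup_ubound; exists M.
apply/eqP; rewrite eq_le -!lee_fin; apply/andP; split.
- by apply: le_trans (le_sup _ CM0) _; rewrite -minmax inf_le.
- by apply: le_trans (le_sup _ CM1) _; rewrite -minmax inf_le.
Qed.

Lemma undetermined_witness M0 : consistent S T M0 -> ~ determined S T x ->
  exists M1 j, consistent S T M1 /\ (x *m M1) ord0 j != (x *m M0) ord0 j.
Proof.
move=> CM0 ndet; apply: contrapT => none; apply: ndet; exists (x *m M0).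
apply/seteqP; split => [_ [M CM <-]|_ ->]; last by exists M0.
apply/matrixP => i j; rewrite (ord1 i); apply: contrapT => neq.
by apply: none; exists M, j; split => //; exact/eqP.
Qed.

Lemma scoreB (v : 'I_nt -> R) M0 M1 : score x M1 v - score x M0 v =
  \sum_j (((x *m M1) ord0 j)%:R - ((x *m M0) ord0 j)%:R) * v j.
Proof. by rewrite /score -sumrB; apply: eq_bigr => j _; rewrite mulrBl. Qed.

End Scores.

Theorem proposition2 (R : realType) (n ns nt : nat)
  (S : 'M[nat]_(n, ns)) (T : 'M[nat]_(n, nt))
  (HC : consistent S T !=set0)
  (x : 'rV[nat]_ns)
  (d : measure_display) (Omega : measurableType d) (P : probability Omega R)
  (g : 'I_nt -> {RV P >-> R})
  (Hnormal : forall j A, measurable A -> distribution P (g j) A = normal_prob 0 1 A)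
  (Hindep : mutually_independent g) :
  {ae P, forall w : Omega,
     score_min S T x (fun j => g j w) = score_max S T x (fun j => g j w)
     <-> determined S T x}.
Proof.
have [M0 CM0] := HC.
have [det|ndet] := pselect (determined S T x).
  by apply: aeW => w; split => // _; exact: determined_score_min_max.
have [M1 [j0 [CM1 xM10]]] := undetermined_witness CM0 ndet.
pose c j : R := ((x *m M1) ord0 j)%:R - ((x *m M0) ord0 j)%:R.
have c_j0 : c j0 != 0 by rewrite subr_eq0 eqr_nat.
have g_j0_itv a b : a <= b ->
    (P (g j0 @^-1` [set` `[a, b]]) <= (normal_peak 1 * (b - a))%:E)%E.
  move=> ab; rewrite -[P _]/(distribution P (g j0) _) Hnormal //.
  exact: normal_prob_itv_le.
apply: negligibleS (linear_combination_eq0_negligible Hindep g_j0_itv c_j0).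
move=> w /= not_iff.
have minmax : score_min S T x (fun j => g j w) = score_max S T x (fun j => g j w).
  by apply: contrapT => neq; apply: not_iff; split => [/neq []|/ndet []].
by rewrite -scoreB (score_min_max_eq CM0 CM1 minmax) subrr.
Qed.
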